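(* A finite simple graph $G$ belongs to $\mathcal{G}_2$ if and only if $G$ has a family of cliques covering every edge of $G$ such that every clique in the family contains a simplicial vertex of $G$.
   Context: A finite topology $\tau$ on a finite set $X$ is a family of subsets of $X$ (the open sets) containing $\emptyset$ and $X$ and closed under unions and intersections. Distinct $x,y\in X$ are $T_2$-separated if there exist disjoint open sets $U_x\ni x$ and $U_y\ni y$. $G_2(\tau)$ is the simple graph with vertex set $X$ in which distinct $x,y$ are adjacent iff they are not $T_2$-separated; $\mathcal{G}_2$ is the class of graphs isomorphic to $G_2(\tau)$ for some finite topology $\tau$. A vertex $v$ of $G$ is simplicial if its closed neighborhood $N[v]$ induces a clique. *)

From mathcomp Require Import all_boot.
Set Implicit Arguments. Unset Strict Implicit. Unset Printing Implicit Defensive.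

Definition is_topology (X : finType) (tau : {set {set X}}) : Prop :=
  [/\ set0 \in tau, [set: X] \in tau,
      (forall U V, U \in tau -> V \in tau -> U :|: V \in tau) &
      (forall U V, U \in tau -> V \in tau -> U :&: V \in tau)].

Definition T2_separated (X : finType) (tau : {set {set X}}) (x y : X) : Prop :=
  exists U V, [/\ U \in tau, V \in tau, x \in U, y \in V & [disjoint U & V]].

Definition G2_adj (X : finType) (tau : {set {set X}}) (x y : X) : Prop :=
  x <> y /\ ~ T2_separated tau x y.

Definition simple_graph (T : finType) (e : rel T) : Prop :=
  symmetric e /\ irreflexive e.

Definition in_G2 (T : finType) (e : rel T) : Prop :=
  exists (X : finType) (tau : {set {set X}}) (f : T -> X),
    [/\ is_topology tau, bijective f &
        forall x y : T, e x y <-> G2_adj tau (f x) (f y)].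

Definition is_clique (T : finType) (e : rel T) (K : {set T}) : Prop :=
  forall x y, x \in K -> y \in K -> x != y -> e x y.

Definition closed_nbhd (T : finType) (e : rel T) (v : T) : {set T} :=
  [set x | (x == v) || e v x].

Definition simplicial (T : finType) (e : rel T) (v : T) : Prop :=
  is_clique e (closed_nbhd e v).

Definition simplicial_edge_clique_cover (T : finType) (e : rel T)
    (F : {set {set T}}) : Prop :=
  [/\ (forall K, K \in F -> is_clique e K),
      (forall x y, e x y -> exists2 K, K \in F & (x \in K) && (y \in K)) &
      (forall K, K \in F -> exists2 v, v \in K & simplicial e v)].

From mathcomp Require Import all_boot.
Set Implicit Arguments. Unset Strict Implicit. Unset Printing Implicit Defensive.

(* In a finite topology every point x has a least open neighbourhood U x, and
   x, y are T2-separated iff U x and U y are disjoint.  If z is a point whose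
   U z is a minimal nonempty open set, the points a with z in U a form a
   clique whose member z is simplicial, and every edge a b lies in such a
   clique: take a minimal point of the open set U a :&: U b.  Conversely,
   call a set open when it is closed under passing from a vertex to its
   simplicial neighbours; the least open neighbourhood of x is then x together
   with its simplicial neighbours.  Two of these meet only if x and y are
   adjacent, since the closed neighbourhood of a simplicial vertex is a clique,
   and they do meet if x and y are adjacent, since the edge lies in a clique of
   the cover with a simplicial vertex. *)

Section SeparationByLeastNeighbourhoods.

Variables (X : finType) (tau : {set {set X}}) (U : X -> {set X}).
Hypotheses (U_open : forall x, U x \in tau) (mem_U : forall x, x \in U x)
  (U_least : forall V x, V \in tau -> x \in V -> U x \subset V).

Lemma T2_separatedE x y : T2_separated tau x y <-> [disjoint U x & U y].
Proof.
split=> [[A [B [A_open B_open xA yB AB]]] | UxUy]; last by exists (U x), (U y).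
exact: disjointWl (U_least A_open xA) (disjointWr (U_least B_open yB) AB).
Qed.

Lemma G2_adjE x y : G2_adj tau x y <-> x != y /\ ~~ [disjoint U x & U y].
Proof.
have [sepW Wsep] := T2_separatedE x y.
split=> -[/eqP xy UxUy]; split=> //; first by apply/negP => /Wsep.
by move=> /sepW; apply/negP.
Qed.

End SeparationByLeastNeighbourhoods.

Section LeastOpenNeighbourhood.

Variables (X : finType) (tau : {set {set X}}).
Hypothesis tau_top : is_topology tau.

Definition min_open (x : X) : {set X} := \bigcap_(V in tau | x \in V) V.

Lemma min_open_open x : min_open x \in tau.
Proof.
case: tau_top => _ setT_open _ setI_open.
by apply: (big_ind (fun V => V \in tau)) => // V /andP[].
Qed.

Lemma mem_min_open x : x \in min_open x.
Proof. by apply/bigcapP => V /andP[]. Qed.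

Lemma min_open_least V x : V \in tau -> x \in V -> min_open x \subset V.
Proof. by move=> V_open xV; apply: bigcap_inf; rewrite V_open xV. Qed.

Lemma min_open_mono x y : y \in min_open x -> min_open y \subset min_open x.
Proof. exact: min_open_least (min_open_open x). Qed.

Definition minimal_point (z : X) : bool :=
  [forall y in min_open z, z \in min_open y].

Lemma minimal_point_in V :
  V \in tau -> V != set0 -> exists2 z, z \in V & minimal_point z.
Proof.
move=> V_open /set0Pn[w wV].
have [z zV z_min] := arg_minnP (fun z => #|min_open z|) wV.
exists z => //; apply/forall_inP => y yUz.
have Uy_sub := min_open_mono yUz.
have yV : y \in V := subsetP (min_open_least V_open zV) y yUz.
have -> : min_open y = min_open z by apply/eqP; rewrite eqEcard Uy_sub z_min.
exact: mem_min_open.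
Qed.

Lemma minimal_point_meet z x :
  minimal_point z -> ~~ [disjoint min_open z & min_open x] -> z \in min_open x.
Proof.
move=> /forall_inP z_min /pred0Pn[w /andP[wUz wUx]].
exact: subsetP (min_open_mono wUx) z (z_min w wUz).
Qed.

End LeastOpenNeighbourhood.

Lemma sub_clique (T : finType) (e : rel T) (A K : {set T}) :
  is_clique e K -> A \subset K -> is_clique e A.
Proof. by move=> K_clique /subsetP AK x y /AK xK /AK yK; apply: K_clique. Qed.

Section G2ToCover.

Variables (T X : finType) (e : rel T) (tau : {set {set X}}) (f : T -> X).
Hypotheses (tau_top : is_topology tau) (f_bij : bijective f)
  (e_G2 : forall a b, e a b <-> G2_adj tau (f a) (f b)).

Local Notation U := (min_open tau).

Lemma edgeE a b : e a b <-> a != b /\ ~~ [disjoint U (f a) & U (f b)].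
Proof.
rewrite -(inj_eq (bij_inj f_bij)); apply: iff_trans (e_G2 a b) _.
exact: G2_adjE (min_open_open tau_top) (@mem_min_open _ tau)
  (@min_open_least _ tau) (f a) (f b).
Qed.

Definition star (z : X) : {set T} := [set a | z \in U (f a)].

Lemma star_clique z : is_clique e (star z).
Proof.
move=> a b; rewrite !inE => za zb ab; apply/edgeE; split=> //.
by apply/pred0Pn; exists z; rewrite /= za zb.
Qed.

Lemma edge_in_star a b :
  e a b -> exists2 z, minimal_point tau z & (a \in star z) && (b \in star z).
Proof.
move/edgeE=> [_ /pred0Pn[w wI]].
have I_open : U (f a) :&: U (f b) \in tau.
  by case: tau_top => _ _ _; apply; apply: min_open_open.
have [|z zI z_min] := minimal_point_in tau_top I_open.
  by apply/set0Pn; exists w; rewrite inE.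
by exists z; rewrite // !inE -in_setI.
Qed.

Lemma star_simplicial v : minimal_point tau (f v) -> simplicial e v.
Proof.
move=> v_min; apply: (@sub_clique _ e _ (star (f v)) (@star_clique (f v))).
apply/subsetP => x; rewrite !inE => /predU1P[-> | evx]; first exact: mem_min_open.
by apply: minimal_point_meet => //; move/edgeE: evx => [].
Qed.

Lemma G2_simplicial_edge_clique_cover :
  exists F : {set {set T}}, simplicial_edge_clique_cover e F.
Proof.
case: (f_bij) => g fK gK.
exists [set star (f v) | v in [pred v | minimal_point tau (f v)]]; split.
- by move=> K /imsetP[v _ ->]; apply: star_clique.
- move=> a b /edge_in_star[z z_min abz]; exists (star z) => //.
  by apply/imsetP; exists (g z); rewrite ?inE gK.
- move=> K /imsetP[v v_min ->]; exists v; first by rewrite inE mem_min_open.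
  exact: star_simplicial.
Qed.

End G2ToCover.

Definition upset_topology (X : finType) (r : rel X) : {set {set X}} :=
  [set V : {set X} | [forall x in V, [set y | r x y] \subset V]].

Lemma upset_topologyE (X : finType) (r : rel X) (V : {set X}) :
  (V \in upset_topology r) = [forall x in V, [set y | r x y] \subset V].
Proof. by rewrite inE. Qed.

Lemma upset_topology_top (X : finType) (r : rel X) : is_topology (upset_topology r).
Proof.
split; rewrite ?upset_topologyE.
- by apply/forall_inP => x; rewrite inE.
- by apply/forall_inP => x _; apply: subsetT.
- move=> A B; rewrite !upset_topologyE => /forall_inP rA /forall_inP rB.
  apply/forall_inP => x /setUP[/rA | /rB] rx; apply: subset_trans rx _.
    exact: subsetUl.
  exact: subsetUr.
- move=> A B; rewrite !upset_topologyE => /forall_inP rA /forall_inP rB.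
  by apply/forall_inP => x /setIP[/rA rxA /rB rxB]; rewrite subsetI rxA.
Qed.

Section CoverToG2.

Variables (T : finType) (e : rel T).
Hypothesis e_sym : symmetric e.

Definition simplicialb (v : T) : bool :=
  [forall x in closed_nbhd e v, forall y in closed_nbhd e v, (x != y) ==> e x y].

Lemma simplicialP v : reflect (simplicial e v) (simplicialb v).
Proof.
apply: (iffP forall_inP) => [v_simp x y xN yN | v_simp x xN].
  by move/forall_inP/(_ y yN)/implyP: (v_simp x xN); apply.
by apply/forall_inP => y yN; apply/implyP; apply: v_simp.
Qed.

Definition simplicial_nbr : rel T := fun x v => simplicialb v && e x v.

Definition simplicial_nbhd (x : T) : {set T} := x |: [set v | simplicial_nbr x v].

Local Notation tau := (upset_topology simplicial_nbr).

Lemma mem_simplicial_nbhd x : x \in simplicial_nbhd x.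
Proof. exact: setU11. Qed.

Lemma simplicial_nbhd_least V x :
  V \in tau -> x \in V -> simplicial_nbhd x \subset V.
Proof.
rewrite upset_topologyE => /forall_inP V_up xV.
by rewrite subUset sub1set xV V_up.
Qed.

Lemma simplicial_nbhd_open x : simplicial_nbhd x \in tau.
Proof.
rewrite upset_topologyE; apply/forall_inP => z.
case/setU1P=> [-> | /[!inE] /andP[/simplicialP z_simp exz]]; first exact: subsetUr.
apply/subsetP => w /[!inE] /andP[w_simp ezw]; rewrite /simplicial_nbr w_simp /=.
case: eqP => //= /eqP wx; apply: z_simp; last by rewrite eq_sym.
- by rewrite inE e_sym exz orbT.
- by rewrite inE ezw orbT.
Qed.

Lemma simplicial_nbhd_meet_adj x y :
  x != y -> ~~ [disjoint simplicial_nbhd x & simplicial_nbhd y] -> e x y.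
Proof.
move=> xy /pred0Pn[w /andP[]]; rewrite !inE.
move/predU1P=> [-> | /andP[/simplicialP w_simp exw]].
  by move/predU1P=> [wy | /andP[_ eyx]]; [rewrite wy eqxx in xy | rewrite e_sym].
move/predU1P=> [<- // | /andP[_ eyw]].
by apply: w_simp; rewrite // inE e_sym ?exw ?eyw orbT.
Qed.

Lemma adj_simplicial_nbhd_meet F x y :
  simplicial_edge_clique_cover e F -> e x y ->
  ~~ [disjoint simplicial_nbhd x & simplicial_nbhd y].
Proof.
case=> F_clique F_cover F_simp /F_cover[K KF /andP[xK yK]].
have [v vK v_simp] := F_simp K KF.
have v_nbhd a : a \in K -> v \in simplicial_nbhd a.
  move=> aK; apply/setU1P; case: (eqVneq v a) => [| va]; [by left | right].
  rewrite inE; apply/andP; split; first exact/simplicialP.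
  by apply: (F_clique K); rewrite // eq_sym.
by apply/pred0Pn; exists v; rewrite /= !v_nbhd.
Qed.

Lemma cover_in_G2 F :
  irreflexive e -> simplicial_edge_clique_cover e F -> in_G2 e.
Proof.
move=> e_irr F_cover; exists T, tau, id; split.
- exact: upset_topology_top.
- by exists id.
move=> x y; apply: iff_trans _ (iff_sym (G2_adjE simplicial_nbhd_open
  mem_simplicial_nbhd simplicial_nbhd_least x y)).
split=> [exy | [xy]]; last exact: simplicial_nbhd_meet_adj.
split; last exact: adj_simplicial_nbhd_meet F_cover exy.
by apply: contraTneq exy => ->; rewrite e_irr.
Qed.

End CoverToG2.

Theorem theorem5p1 (T : finType) (e : rel T) (He : simple_graph e) :
  in_G2 e <-> exists F : {set {set T}}, simplicial_edge_clique_cover e F.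
Proof.
case: He => e_sym e_irr; split.
- case=> X [tau [f [tau_top f_bij e_G2]]].
  exact: G2_simplicial_edge_clique_cover tau_top f_bij e_G2.
- by case=> F F_cover; apply: cover_in_G2 F_cover.
Qed.
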